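(* Every magma satisfying $\mathrm{x}\simeq\mathrm{x}\diamond((\mathrm{y}\diamond\mathrm{z})\diamond(\mathrm{x}\diamond\mathrm{z}))$ also satisfies the right idempotence law $\mathrm{x}\diamond\mathrm{y}\simeq(\mathrm{x}\diamond\mathrm{y})\diamond\mathrm{y}$.
   Context: A magma is a set with a binary operation $\diamond$; it satisfies a law if the identity holds for all assignments of variables. *)


Section Magma.

Variables (M : Type) (op : M -> M -> M).

Hypothesis law : forall x y z : M, x = op x (op (op y z) (op x z)).

(* Take [z := (x x)(x x)]: the law at [(x, x, x)] collapses [x z] to [x]. *)
Lemma absorb_square (x : M) : x = op x (op x x).
Proof.
  pose proof (law x x (op (op x x) (op x x))) as E.
  now rewrite <- (law x x x) in E.
Qed.

Lemma absorb_mixed (x y : M) : x = op x (op y (op x (op y y))).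
Proof.
  pose proof (law x y (op y y)) as E.
  now rewrite <- (absorb_square y) in E.
Qed.

End Magma.

Theorem mainTheorem10 (M : Type) (op : M -> M -> M)
  (H : forall x y z : M, x = op x (op (op y z) (op x z))) :
  forall x y : M, op x y = op (op x y) y.
Proof.
  intros x y.
  pose proof (absorb_mixed M op H (op x y) y) as E.
  now rewrite <- (H y x y) in E.
Qed.
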